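(* Let $b\in\mathbb R^d\setminus\{0\}$ and $\lambda_1\ge\dots\ge\lambda_d>0$. Define $F(y)=-\sum_{i=1}^d|b_i|\sqrt{y_i}-\sqrt{\sum_{i=1}^d\lambda_i^{-1}y_i}$, $B_i=b_i^2(\|b\|_2+\lambda_d^{-1/2})^{-2}$, $\mathcal I=\{i\in[d]:b_i\neq0\}$, $D_F=\{y\in\mathbb R^d:y_i>B_i\ \forall i\in[d],\ \sum_{i=1}^dy_i<1\}$, $$t_0=9\max\Big(\max_{i\in\mathcal I}(b_i^2B_i)^{-1/2},\ \min_{i\in\mathcal I}(\lambda_i^{-1}B_i)^{-1/2}\Big),$$ and for $t>0$, $F^{(t)}(y)=tF(y)-\sum_{i=1}^d\log(y_i-B_i)-\log\big(1-\sum_{i=1}^dy_i\big)$. Then for all $t\ge t_0$, $F^{(t)}$ is self-concordant on $D_F$.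
   Context: A function $G$ satisfies the self-concordance differential inequality on $D\subset\mathbb R^d$ if for every $z\in D$ and $h\in\mathbb R^d$, $|D^3G(z)[h,h,h]|\le2\,(D^2G(z)[h,h])^{3/2}$, where $D^kG(z)[h,\dots,h]$ is the $k$-th directional derivative. $G$ defined on $D$ is self-concordant if it satisfies this inequality on $D$ and $G(z)\to+\infty$ as $z\to\partial D$. *)

From HB Require Import structures.
From mathcomp Require Import all_boot all_order all_algebra.
From mathcomp Require Import all_classical all_reals all_analysis.
Set Implicit Arguments. Unset Strict Implicit. Unset Printing Implicit Defensive.
Import Order.TTheory GRing.Theory Num.Theory.
Import numFieldNormedType.Exports.
Local Open Scope classical_set_scope.
Local Open Scope ring_scope.

Section SC.
Variables (R : realType) (d : nat).
Notation vec := ('I_d -> R).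

Definition line_fun (G : vec -> R) (z h : vec) : R -> R :=
  fun s => G (fun i => z i + s * h i).

Definition dirD1 G z h : R := derive1 (line_fun G z h) 0.
Definition dirD2 G z h : R := derive1 (derive1 (line_fun G z h)) 0.
Definition dirD3 G z h : R := derive1 (derive1 (derive1 (line_fun G z h))) 0.

Definition sc_inequality (G : vec -> R) (D : set vec) : Prop :=
  forall z, D z -> forall h : vec,
    [/\ derivable (line_fun G z h) 0 1,
        derivable (derive1 (line_fun G z h)) 0 1,
        derivable (derive1 (derive1 (line_fun G z h))) 0 1 &
        `| dirD3 G z h | <= 2 * (Num.sqrt (dirD2 G z h)) ^+ 3].

(* closure / interior of D w.r.t. the (product = norm) topology of R^d,
   via coordinatewise eps-balls *)
Definition in_closure (D : set vec) (p : vec) : Prop :=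
  forall eps : R, 0 < eps -> exists z, D z /\ forall i, `| z i - p i | < eps.
Definition in_interior (D : set vec) (p : vec) : Prop :=
  exists2 eps : R, 0 < eps & forall z, (forall i, `| z i - p i | < eps) -> D z.

Definition blowup_at_boundary (G : vec -> R) (D : set vec) : Prop :=
  forall p, in_closure D p -> ~ in_interior D p ->
    forall M : R, exists2 eps : R, 0 < eps &
      forall z, D z -> (forall i, `| z i - p i | < eps) -> M < G z.

Definition self_concordant (G : vec -> R) (D : set vec) : Prop :=
  sc_inequality G D /\ blowup_at_boundary G D.

End SC.

Section Lemma2Defs.
Variables (R : realType) (n : nat).
(* the dimension is d = n.+1 (b <> 0 forces d >= 1); lambda_d = lam ord_max *)
Notation vec := ('I_n.+1 -> R).
Variables (b lam : vec).

Definition norm2 (v : vec) : R := Num.sqrt (\sum_(i < n.+1) v i ^+ 2).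

Definition Fobj (y : vec) : R :=
  - (\sum_(i < n.+1) `| b i | * Num.sqrt (y i))
  - Num.sqrt (\sum_(i < n.+1) (lam i)^-1 * y i).

Definition Bc (i : 'I_n.+1) : R :=
  b i ^+ 2 * ((norm2 b + (Num.sqrt (lam ord_max))^-1) ^+ 2)^-1.

Definition Iset : set 'I_n.+1 := [set i | b i != 0].

Definition DF : set vec :=
  [set y | (forall i, Bc i < y i) /\ \sum_(i < n.+1) y i < 1].

Definition t0 : R :=
  9 * Num.max
        (sup [set (Num.sqrt (b i ^+ 2 * Bc i))^-1 | i in Iset])
        (inf [set (Num.sqrt ((lam i)^-1 * Bc i))^-1 | i in Iset]).

Definition Ft (t : R) (y : vec) : R :=
  t * Fobj y - \sum_(i < n.+1) ln (y i - Bc i) - ln (1 - \sum_(i < n.+1) y i).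

End Lemma2Defs.

(* Along a line y + s h, every summand of F^(t) has the form s |-> phi (a + s c)
   with phi = -ln, which satisfies the self-concordance inequality with
   equality, or phi = -w sqrt, which satisfies it as soon as 4 w sqrt a >= 9.
   The inequality is preserved by affine reparametrisation (both sides scale
   by |c|^3) and by sums, since sqrt x ^3 + sqrt y ^3 <= sqrt (x + y) ^3.  On D_F
   we have y_i > B_i, so the choice of t0 gives t |b_i| sqrt y_i >= 9 and
   t sqrt (sum_i y_i / lam_i) >= 9.  For the blow-up, F is bounded below on D_F,
   every logarithmic term of F^(t) is nonnegative there, and near a boundary
   point one of them exceeds any bound. *)

From HB Require Import structures.
From mathcomp Require Import all_boot all_order all_algebra.
From mathcomp Require Import all_classical all_reals all_analysis.
From mathcomp Require Import ring lra.
Import Order.TTheory GRing.Theory Num.Theory.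
Import numFieldNormedType.Exports.
Set Implicit Arguments. Unset Strict Implicit. Unset Printing Implicit Defensive.
Local Open Scope classical_set_scope.
Local Open Scope ring_scope.

Section SqrtCube.
Variable R : rcfType.

Lemma ler_sqrt_cubeD (x y : R) : 0 <= x -> 0 <= y ->
  Num.sqrt x ^+ 3 + Num.sqrt y ^+ 3 <= Num.sqrt (x + y) ^+ 3.
Proof.
move=> x0 y0; have xy0 := addr_ge0 x0 y0.
have cube_le u : 0 <= u -> u <= x + y -> Num.sqrt u ^+ 3 <= u * Num.sqrt (x + y).
  by move=> u0 uxy; rewrite exprSr sqr_sqrtr // ler_wpM2l // ler_sqrt.
rewrite [X in _ <= X]exprSr sqr_sqrtr // mulrDl.
by rewrite lerD // cube_le // ?lerDl ?lerDr.
Qed.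

Lemma ler_norm_sqrt_cube (y x : R) : 0 <= x -> y ^+ 2 <= 4 * x ^+ 3 ->
  `|y| <= 2 * Num.sqrt x ^+ 3.
Proof.
move=> x0 yx; rewrite -(@ler_pXn2r _ 2) ?nnegrE ?mulr_ge0 ?exprn_ge0 ?sqrtr_ge0 //.
have -> : (2 * Num.sqrt x ^+ 3) ^+ 2 = 4 * (Num.sqrt x ^+ 2) ^+ 3 by ring.
by rewrite real_normK ?num_real // sqr_sqrtr.
Qed.

End SqrtCube.

Section SelfConcordantAt.
Variable R : realType.
Implicit Types (f g : R -> R) (x a c : R).

Definition derives3 f f1 f2 f3 x := \forall u \near x,
  [/\ is_derive u (1 : R) f (f1 u), is_derive u (1 : R) f1 (f2 u)
     & is_derive u (1 : R) f2 (f3 u)].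

Definition sc_at f x := exists f1 f2 f3,
  [/\ derives3 f f1 f2 f3 x, 0 <= f2 x & `|f3 x| <= 2 * Num.sqrt (f2 x) ^+ 3].

Lemma near_derive1 f g x : (\forall u \near x, is_derive u (1 : R) f (g u)) ->
  \forall u \near x, derive1 f u = g u.
Proof. by apply: filterS => u fu; rewrite derive1E derive_val. Qed.

Lemma near_is_derive_derive1 f f1 f2 x :
  (\forall u \near x, is_derive u (1 : R) f (f1 u) /\ is_derive u (1 : R) f1 (f2 u)) ->
  \forall u \near x, is_derive u (1 : R) (derive1 f) (f2 u).
Proof.
move=> H; apply: filterS (TopologicalNumDomainType.nbhs_nbhs H) => u Hu.
have [_ f1u] := nbhs_singleton Hu.
apply: near_eq_is_derive f1u.
have Hf : \forall v \near u, is_derive v (1 : R) f (f1 v) by apply: filterS Hu => v [].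
by apply: filterS (near_derive1 Hf) => v ->.
Qed.

Lemma derives3_derive1 f f1 f2 f3 x : derives3 f f1 f2 f3 x ->
  [/\ derivable f x 1, derivable (derive1 f) x 1,
      derivable (derive1 (derive1 f)) x 1,
      derive1 (derive1 f) x = f2 x & derive1 (derive1 (derive1 f)) x = f3 x].
Proof.
move=> H.
have D1 : \forall u \near x, is_derive u (1 : R) (derive1 f) (f2 u).
  by apply: (near_is_derive_derive1 (f1 := f1)); apply: filterS H => u [? ? _].
have D2 : \forall u \near x, is_derive u (1 : R) (derive1 (derive1 f)) (f3 u).
  by apply: (near_is_derive_derive1 (f1 := f2)); apply: filterS2 D1 H => u ? [_ _ ?].
have [[d0 _] _ _] := nbhs_singleton H.
have [d1 E1] := nbhs_singleton D1; have [d2 E2] := nbhs_singleton D2.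
split; [exact: d0 | exact: d1 | exact: d2 | |]; by rewrite derive1E.
Qed.

Lemma sc_at_cst (k x : R) : sc_at (fun=> k) x.
Proof.
exists (fun=> 0), (fun=> 0), (fun=> 0); split => //.
- by near=> u; split; apply: is_derive_cst.
- by rewrite normr0 sqrtr0 expr0n /= mulr0.
Unshelve. all: by end_near.
Qed.

Lemma sc_atD f g x : sc_at f x -> sc_at g x -> sc_at (fun u => f u + g u) x.
Proof.
move=> [f1 [f2 [f3 [Df f20 f3le]]]] [g1 [g2 [g3 [Dg g20 g3le]]]].
exists (fun u => f1 u + g1 u), (fun u => f2 u + g2 u), (fun u => f3 u + g3 u).
split; first by apply: filterS2 Df Dg => u [? ? ?] [? ? ?]; split; exact: is_deriveD.
- exact: addr_ge0.
- apply: le_trans (ler_normD _ _) _; apply: le_trans (lerD f3le g3le) _.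
  by rewrite -mulrDr ler_pM2l // ler_sqrt_cubeD.
Qed.

Lemma sc_at_sum k (F : 'I_k -> R -> R) x : (forall i, sc_at (F i) x) ->
  sc_at (fun u => \sum_(i < k) F i u) x.
Proof.
elim: k F => [|k IH] F scF.
  by under eq_fun do rewrite big_ord0; exact: sc_at_cst.
under eq_fun do rewrite big_ord_recr.
by apply: sc_atD; [exact: (IH (fun i => F (widen_ord (leqnSn k) i))) | exact: scF].
Qed.

Lemma near_affine (P : R -> Prop) a c : (\forall u \near a, P u) ->
  \forall s \near 0, P (a + s * c).
Proof.
have : (fun s => a + s * c) @ 0 --> a + 0 * c.
  by apply: cvgD; [exact: cvg_cst | apply: cvgM; [exact: cvg_id | exact: cvg_cst]].
by rewrite mul0r addr0; apply.
Qed.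

Lemma is_derive_affine a c s : is_derive s (1 : R) (fun s => a + s * c) c.
Proof. by apply: is_derive_eq; rewrite add0r mul1r scaler0 add0r; exact: mulr1. Qed.

Lemma is_derive_comp_affine g dg a c s : is_derive (a + s * c) (1 : R) g dg ->
  is_derive s (1 : R) (fun s => g (a + s * c)) (c * dg).
Proof.
move=> Dg.
have Dgc := is_derive1_comp (g := fun s => a + s * c) Dg (is_derive_affine a c s).
by apply: (is_derive_eq Dgc); rewrite mulrC.
Qed.

Lemma sc_at_comp_affine f a c : sc_at f a -> sc_at (fun s => f (a + s * c)) 0.
Proof.
move=> [f1 [f2 [f3 [Df f20 f3le]]]].
exists (fun s => c * f1 (a + s * c)), (fun s => c ^+ 2 * f2 (a + s * c)),
  (fun s => c ^+ 3 * f3 (a + s * c)); rewrite !mul0r !addr0; split.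
- apply: filterS (near_affine c Df) => s [d1 d2 d3]; split.
  + exact: is_derive_comp_affine d1.
  + apply: (is_derive_eq (is_deriveZ c (is_derive_comp_affine d2))).
    by rewrite expr2 -mulrA.
  + apply: (is_derive_eq (is_deriveZ (c ^+ 2) (is_derive_comp_affine d3))).
    by rewrite [c ^+ 3]exprSr -mulrA.
- by rewrite mulr_ge0 ?sqr_ge0.
- rewrite sqrtrM ?sqr_ge0 // sqrtr_sqr normrM normrX exprMn mulrCA.
  by rewrite ler_wpM2l ?exprn_ge0.
Qed.

Lemma is_derive_scale_invXn f df (k : R) m x : f x != 0 ->
  is_derive x (1 : R) f df ->
  is_derive x (1 : R) (fun y => k * (f y ^+ m)^-1) (- (k * m%:R * df) / f x ^+ m.+1).
Proof.
move=> fx0 Df; have DfX := is_deriveX m Df; rewrite exprfctE in DfX.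
have D := is_deriveZ k (is_deriveV (f := fun y => f y ^+ m) (expf_neq0 m fx0) DfX).
apply: (is_derive_eq D).
rewrite -![_ *: _]/(_ * _); case: m {DfX D} => [|m].
  by rewrite !(mul0r, mulr0, oppr0).
by rewrite !exprS; field; rewrite fx0 expf_neq0.
Qed.

Lemma sc_at_neg_ln a : 0 < a -> sc_at (fun u => - ln u) a.
Proof.
move=> a0; exists (fun u => -1 * (u ^+ 1)^-1), (fun u => 1 * (u ^+ 2)^-1),
  (fun u => -2 * (u ^+ 3)^-1); split.
- apply: filterS (lt_nbhsr a0) => u u0; have u_neq0 : u != 0 by rewrite gt_eqF.
  split.
  + by apply: (is_derive_eq (is_deriveN (is_derive1_ln u0))); rewrite expr1 mulN1r.
  + apply: (is_derive_eq (is_derive_scale_invXn (-1) 1 u_neq0 (is_derive_id u 1))).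
    by field.
  + apply: (is_derive_eq (is_derive_scale_invXn 1 2 u_neq0 (is_derive_id u 1))).
    by field.
- by rewrite mul1r invr_ge0 exprn_ge0 // ltW.
- apply: ler_norm_sqrt_cube; first by rewrite mul1r invr_ge0 exprn_ge0 // ltW.
  have a_neq0 : a != 0 by rewrite gt_eqF.
  by rewrite [X in _ <= X](_ : _ = (-2 * (a ^+ 3)^-1) ^+ 2) //; field.
Qed.

Lemma sc_at_neg_sqrt w a : 9 <= 4 * w * Num.sqrt a ->
  sc_at (fun u => - w * Num.sqrt u) a.
Proof.
move=> wa; exists (fun u => - (w / 2) * (Num.sqrt u ^+ 1)^-1),
  (fun u => w / 4 * (Num.sqrt u ^+ 3)^-1),
  (fun u => - (3 * w / 8) * (Num.sqrt u ^+ 5)^-1).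
have r0 : 0 < Num.sqrt a.
  rewrite lt0r sqrtr_ge0 andbT; apply: contraTneq wa => ->.
  by rewrite mulr0; apply/negP; lra.
have a0 : 0 < a by rewrite -sqrtr_gt0.
have w0 : 0 < w by nra.
split.
- apply: filterS (lt_nbhsr a0) => u u0.
  have su0 : Num.sqrt u != 0 by rewrite gt_eqF // sqrtr_gt0.
  split.
  + apply: (is_derive_eq (is_deriveZ (- w) (is_derive1_sqrt u0))).
    by rewrite -[_ *: _]/(_ * _); field.
  + apply: (is_derive_eq (is_derive_scale_invXn (- (w / 2)) 1 su0 (is_derive1_sqrt u0))).
    by field.
  + apply: (is_derive_eq (is_derive_scale_invXn (w / 4) 3 su0 (is_derive1_sqrt u0))).
    by field.
- by rewrite mulr_ge0 ?divr_ge0 ?invr_ge0 ?exprn_ge0 ?ltW.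
- apply: ler_norm_sqrt_cube.
    by rewrite mulr_ge0 ?divr_ge0 ?invr_ge0 ?exprn_ge0 ?ltW.
  move: r0 wa; set r := Num.sqrt a => r0 wa; have r_neq0 : r != 0 by rewrite gt_eqF.
  rewrite -subr_ge0.
  have -> : 4 * (w / 4 * (r ^+ 3)^-1) ^+ 3 - (- (3 * w / 8) * (r ^+ 5)^-1) ^+ 2
      = w ^+ 2 / (64 * r ^+ 10) * (4 * w * r - 9) by field.
  by rewrite mulr_ge0 ?subr_ge0 // divr_ge0 ?sqr_ge0 // mulr_ge0 // exprn_ge0 // ltW.
Qed.

Lemma sc_at_line d (G : ('I_d -> R) -> R) z h : sc_at (line_fun G z h) 0 ->
  [/\ derivable (line_fun G z h) 0 1, derivable (derive1 (line_fun G z h)) 0 1,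
      derivable (derive1 (derive1 (line_fun G z h))) 0 1 &
      `| dirD3 G z h | <= 2 * (Num.sqrt (dirD2 G z h)) ^+ 3].
Proof.
move=> [f1 [f2 [f3 [Df _ f3le]]]]; have [d1 d2 d3 E2 E3] := derives3_derive1 Df.
by split; [exact: d1 | exact: d2 | exact: d3 | rewrite /dirD3 /dirD2 E2 E3].
Qed.
End SelfConcordantAt.

Lemma ler_term_sum (R : numDomainType) (I : finType) (F : I -> R) i :
  (forall j, 0 <= F j) -> F i <= \sum_j F j.
Proof. by move=> F0; rewrite (bigD1 i) //= lerDl sumr_ge0. Qed.

Lemma ltr_oppr_ln (R : realType) (w M : R) : 0 < w -> w < expR (- M) -> M < - ln w.
Proof. by move=> w0 wM; rewrite ltrNr -[- M]expRK ltr_ln ?posrE ?expR_gt0. Qed.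

Section Barrier.
Variables (R : realType) (n : nat) (b lam : 'I_n.+1 -> R).
Hypotheses (b_neq0 : b <> (fun=> 0)) (lam_gt0 : forall i, 0 < lam i).
Local Notation B := (Bc b lam).

Lemma exists_b_neq0 : exists i, b i != 0.
Proof.
apply/not_existsP => b0; apply: b_neq0; apply/funext => i.
by apply/eqP; rewrite -[_ == _]negbK; exact/negP/b0.
Qed.

Lemma Bc_ge0 i : 0 <= B i.
Proof. by rewrite mulr_ge0 ?sqr_ge0 // invr_ge0 sqr_ge0. Qed.

Lemma Bc_gt0 i : b i != 0 -> 0 < B i.
Proof.
move=> bi0; rewrite mulr_gt0 ?exprn_even_gt0 //= ?bi0 //.
by rewrite invr_gt0 exprn_gt0 // ltr_wpDl ?sqrtr_ge0 // invr_gt0 sqrtr_gt0.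
Qed.

Lemma coord_weight_gt0 i : b i != 0 -> 0 < b i ^+ 2 * B i.
Proof. by move=> bi0; rewrite mulr_gt0 ?Bc_gt0 // exprn_even_gt0. Qed.

Lemma t0_ge_inv_coord i : b i != 0 -> 9 * (Num.sqrt (b i ^+ 2 * B i))^-1 <= t0 b lam.
Proof.
move=> bi0; rewrite ler_pM2l // le_max; apply/orP; left.
apply: ub_le_sup; last by exists i.
exists (\sum_j `|(Num.sqrt (b j ^+ 2 * B j))^-1|) => _ [j _ <-].
exact: le_trans (ler_norm _) (ler_term_sum j (fun k => normr_ge0 _)).
Qed.

Lemma t0_ge_inv_weighted L : 0 < L -> (forall i, b i != 0 -> (lam i)^-1 * B i <= L) ->
  9 * (Num.sqrt L)^-1 <= t0 b lam.
Proof.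
move=> L0 BL; rewrite ler_pM2l // le_max; apply/orP; right.
have [i0 bi0] := exists_b_neq0.
apply: lb_le_inf; first by exists (Num.sqrt ((lam i0)^-1 * B i0))^-1, i0.
move=> _ [j bj0 <-].
have BLj_gt0 : 0 < (lam j)^-1 * B j by rewrite mulr_gt0 ?invr_gt0 ?Bc_gt0.
by rewrite lef_pV2 ?posrE ?sqrtr_gt0 // ler_sqrt ?BL // ltW.
Qed.

Lemma t0_gt0 : 0 < t0 b lam.
Proof.
have [i0 bi0] := exists_b_neq0; apply: lt_le_trans (t0_ge_inv_coord bi0).
by rewrite mulr_gt0 // invr_gt0 sqrtr_gt0 coord_weight_gt0.
Qed.

Lemma coord_weight_ge9 t y i : t0 b lam <= t -> b i != 0 -> B i < y i ->
  9 <= t * `|b i| * Num.sqrt (y i).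
Proof.
move=> t0t bi0 Byi; have := le_trans (t0_ge_inv_coord bi0) t0t.
rewrite ler_pdivrMr ?sqrtr_gt0 ?coord_weight_gt0 // => /le_trans; apply.
have t_ge0 : 0 <= t := le_trans (ltW t0_gt0) t0t.
rewrite sqrtrM ?sqr_ge0 // sqrtr_sqr mulrA ler_wpM2l ?mulr_ge0 //.
by rewrite ler_sqrt ?ltW // (le_lt_trans (Bc_ge0 i)).
Qed.

Lemma sum_weight_ge9 t y : t0 b lam <= t -> (forall i, B i < y i) ->
  9 <= t * Num.sqrt (\sum_i (lam i)^-1 * y i).
Proof.
move=> t0t By; set L := \sum_i _.
have term_gt0 i : 0 < (lam i)^-1 * y i.
  by rewrite mulr_gt0 ?invr_gt0 // (le_lt_trans (Bc_ge0 i)).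
have termL i : (lam i)^-1 * y i <= L by apply: ler_term_sum => j; exact: ltW.
have L0 : 0 < L := lt_le_trans (term_gt0 ord0) (termL ord0).
have BL i : b i != 0 -> (lam i)^-1 * B i <= L.
  by move=> _; apply: le_trans (termL i); rewrite ler_wpM2l ?invr_ge0 ?ltW.
have := le_trans (t0_ge_inv_weighted L0 BL) t0t.
by rewrite ler_pdivrMr // sqrtr_gt0.
Qed.

Lemma Ft_line t (z h : 'I_n.+1 -> R) : line_fun (Ft b lam t) z h = fun s =>
  \sum_i - (t * `|b i|) * Num.sqrt (z i + s * h i)
  + - t * Num.sqrt (\sum_i (lam i)^-1 * z i + s * \sum_i (lam i)^-1 * h i)
  + \sum_i - ln (z i - B i + s * h i)
  + - ln (1 - \sum_i z i + s * - \sum_i h i).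
Proof.
apply/funext => s; rewrite /line_fun /Ft /Fobj.
have -> : \sum_i (lam i)^-1 * (z i + s * h i)
    = \sum_i (lam i)^-1 * z i + s * \sum_i (lam i)^-1 * h i.
  by rewrite mulr_sumr -big_split; apply: eq_bigr => i _ /=; ring.
have -> : \sum_i - (t * `|b i|) * Num.sqrt (z i + s * h i)
    = - (t * \sum_i `|b i| * Num.sqrt (z i + s * h i)).
  by rewrite mulr_sumr -sumrN; apply: eq_bigr => i _; rewrite mulNr mulrA.
have -> : \sum_i - ln (z i - B i + s * h i) = - \sum_i ln (z i + s * h i - B i).
  by rewrite -sumrN; apply: eq_bigr => i _; rewrite addrAC.
have -> : \sum_i (z i + s * h i) = \sum_i z i + s * \sum_i h i.
  by rewrite big_split /= mulr_sumr.
have -> : 1 - \sum_i z i + s * - \sum_i h i = 1 - (\sum_i z i + s * \sum_i h i) by ring.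
ring.
Qed.

Lemma Ft_sc_inequality t : t0 b lam <= t -> sc_inequality (Ft b lam t) (DF b lam).
Proof.
move=> t0t z [Bz sumz_lt1] h; apply: sc_at_line; rewrite Ft_line.
have z_gt0 i : 0 < z i := le_lt_trans (Bc_ge0 i) (Bz i).
apply: sc_atD; [apply: sc_atD; [apply: sc_atD|]|].
- apply: sc_at_sum => i; have [bi0|bi0] := eqVneq (b i) 0.
    by under eq_fun do rewrite bi0 normr0 mulr0 oppr0 mul0r; exact: sc_at_cst.
  apply: (sc_at_comp_affine (f := fun u => - (t * `|b i|) * Num.sqrt u)).
  apply: sc_at_neg_sqrt; have := coord_weight_ge9 t0t bi0 (Bz i); lra.
- apply: (sc_at_comp_affine (f := fun u => - t * Num.sqrt u)).
  apply: sc_at_neg_sqrt; have := sum_weight_ge9 t0t Bz; lra.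
- apply: sc_at_sum => i; apply: (sc_at_comp_affine (f := fun u => - ln u)).
  by apply: sc_at_neg_ln; rewrite subr_gt0.
- apply: (sc_at_comp_affine (f := fun u => - ln u)).
  by apply: sc_at_neg_ln; rewrite subr_gt0.
Qed.

Lemma DF_interior p : (forall i, B i < p i) -> \sum_i p i < 1 -> in_interior (DF b lam) p.
Proof.
move=> Bp sp1.
have gap_gt0 i : 0 < p i - B i by rewrite subr_gt0.
have slack_gt0 : 0 < 1 - \sum_i p i by rewrite subr_gt0.
(* [S^-1] lies below every gap [p i - B i] and below [(1 - \sum_i p i) / n.+1] *)
set S := \sum_i (p i - B i)^-1 + n.+1%:R / (1 - \sum_i p i).
have inv_gap_ge0 i : 0 <= (p i - B i)^-1 by rewrite invr_ge0 ltW.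
have gap_le i : (p i - B i)^-1 <= S.
  by apply: le_trans (ler_term_sum i inv_gap_ge0) _; rewrite lerDl divr_ge0 ?ltW.
have slack_le : n.+1%:R / (1 - \sum_i p i) <= S.
  by rewrite /S lerDr sumr_ge0.
have S_gt0 : 0 < S by apply: lt_le_trans slack_le; rewrite divr_gt0.
exists S^-1; first by rewrite invr_gt0.
move=> z pz; split.
- move=> i; have : S^-1 <= p i - B i.
    by rewrite -[X in _ <= X]invrK lef_pV2 ?posrE ?invr_gt0.
  by have := pz i; rewrite ltr_norml => /andP[? _]; lra.
- have : n.+1%:R * S^-1 <= 1 - \sum_i p i.
    rewrite -ler_pdivlMl ?ltr0n // -[X in _ <= X]invrK.
    rewrite lef_pV2 ?posrE ?invr_gt0 ?divr_gt0 //.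
      by rewrite invfM invrK.
    by rewrite mulr_gt0 ?invr_gt0.
  have : \sum_i (z i - p i) < \sum_(i < n.+1) S^-1.
    apply: ltr_sum; first by apply/hasP; exists ord0; rewrite ?mem_index_enum.
    by move=> i _; apply: le_lt_trans (ler_norm _) (pz i).
  rewrite sumr_const card_ord sumrB -mulr_natl; lra.
Qed.

Lemma not_interior_DF p : ~ in_interior (DF b lam) p ->
  (exists i, p i <= B i) \/ 1 <= \sum_i p i.
Proof.
move=> pni; have [|Bp] := pselect (exists i, p i <= B i); first by left.
right; rewrite leNgt; apply/negP => sp1; apply/pni/DF_interior => // i.
by rewrite ltNge; apply/negP => piB; apply: Bp; exists i.
Qed.

Definition Fobj_lb : R := - (\sum_i `|b i| + Num.sqrt (\sum_i (lam i)^-1)).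

Lemma DF_bounds y : DF b lam y ->
  (forall i, [/\ 0 <= B i, B i < y i & y i <= 1]) /\ 0 <= \sum_i y i < 1.
Proof.
move=> [By sy1]; have y_ge0 i : 0 <= y i := ltW (le_lt_trans (Bc_ge0 i) (By i)).
have sy_ge0 : 0 <= \sum_i y i by exact: sumr_ge0.
split=> [i|]; last by rewrite sy_ge0.
by split; [exact: Bc_ge0 | exact: By | exact: le_trans (ler_term_sum i y_ge0) (ltW sy1)].
Qed.

Lemma Fobj_ge_lb y : DF b lam y -> Fobj_lb <= Fobj b lam y.
Proof.
move=> /DF_bounds[By _]; have y_ge0 i : 0 <= y i by have [] := By i; lra.
rewrite /Fobj_lb /Fobj opprD lerB // ?lerN2.
  by apply: ler_sum => i _; have [_ _ y1] := By i; rewrite ler_piMr // -sqrtr1 ler_sqrt.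
rewrite ler_sqrt ?sumr_ge0 // => [|i _]; last by rewrite invr_ge0 ltW.
apply: ler_sum => i _; have [_ _ y1] := By i.
by rewrite -[X in _ <= X]mulr1 ler_wpM2l // invr_ge0 ltW.
Qed.

Lemma Ft_ge t y : 0 <= t -> DF b lam y ->
  (forall i, t * Fobj_lb - ln (y i - B i) <= Ft b lam t y) /\
  t * Fobj_lb - ln (1 - \sum_i y i) <= Ft b lam t y.
Proof.
move=> t_ge0 Dy; have [By /andP[sy_ge0 sy1]] := DF_bounds Dy.
have nlnB_ge0 i : 0 <= - ln (y i - B i).
  by have [? ? ?] := By i; rewrite oppr_ge0 ln_le0 //; lra.
have nln1_ge0 : 0 <= - ln (1 - \sum_i y i) by rewrite oppr_ge0 ln_le0 //; lra.
have tF : t * Fobj_lb <= t * Fobj b lam y by rewrite ler_wpM2l ?Fobj_ge_lb.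
have : 0 <= \sum_i - ln (y i - B i) by apply: sumr_ge0 => i _; exact: nlnB_ge0.
rewrite /Ft -sumrN; split => [i|]; last lra.
by have := ler_term_sum i nlnB_ge0; lra.
Qed.

Lemma Ft_blowup t : 0 <= t -> blowup_at_boundary (Ft b lam t) (DF b lam).
Proof.
move=> t_ge0 p _ pni M; set e := expR (- (M - t * Fobj_lb)).
have e_gt0 : 0 < e := expR_gt0 _.
have eps_le : e / n.+1%:R <= e.
  by rewrite ler_pdivrMr ?ltr0n // ler_peMr ?(ltW e_gt0) // (ler_nat R 1 n.+1).
exists (e / n.+1%:R); first by rewrite divr_gt0 ?ltr0n.
move=> z Dz pz; have [By /andP[_ sz1]] := DF_bounds Dz.
have [Ft_coord Ft_slack] := Ft_ge t_ge0 Dz.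
case: (not_interior_DF pni) => [[i piB] | sp1].
- have gap_gt0 : 0 < z i - B i by have [] := By i; rewrite subr_gt0.
  have : z i - B i < e.
    by have := lt_le_trans (le_lt_trans (ler_norm _) (pz i)) eps_le; lra.
  by move=> /(ltr_oppr_ln gap_gt0); have := Ft_coord i; lra.
- have : 1 - \sum_i z i < e.
    have : \sum_i (p i - z i) < \sum_(i < n.+1) (e / n.+1%:R).
      apply: ltr_sum; first by apply/hasP; exists ord0; rewrite ?mem_index_enum.
      by move=> i _; apply: le_lt_trans (ler_norm _) _; rewrite distrC.
    have eps_sum : e / n.+1%:R *+ n.+1 = e by rewrite -mulr_natr divfK ?pnatr_eq0.
    by rewrite sumr_const card_ord eps_sum sumrB; lra.
  have slack_gt0 : 0 < 1 - \sum_i z i by rewrite subr_gt0.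
  by move=> /(ltr_oppr_ln slack_gt0); have := Ft_slack; lra.
Qed.

End Barrier.

Theorem lemma2 (R : realType) (n : nat) (b lam : 'I_n.+1 -> R) :
  b <> (fun _ => 0) ->
  (forall i j : 'I_n.+1, (i <= j)%N -> lam j <= lam i) ->
  (forall i, 0 < lam i) ->
  forall t : R, t0 b lam <= t -> self_concordant (Ft b lam t) (DF b lam).
Proof.
move=> b_neq0 _ lam_gt0 t t0t; split; first exact: Ft_sc_inequality.
exact/Ft_blowup/ltW/(lt_le_trans (t0_gt0 b_neq0 lam_gt0) t0t).
Qed.
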